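(* Let $A\in\mathbb{R}^{n\times n}$, $C\in\mathbb{R}^{m\times n}$. The linear system $x^+=Ax$, $y=Cx$ (with $\mathcal{X}=\mathbb{R}^n$, $\mathcal{Y}=\mathbb{R}^m$) is deadbeat observable if and only if there exists an integer $p\ge1$ such that for every $x\in\mathbb{R}^n$ the set $[x]_{p-1}$ is either a singleton or empty.
   Context: For a system $x^+=f(x)$, $y=h(x)$ with $f:\mathcal{X}\to\mathcal{X}$, $h:\mathcal{X}\to\mathcal{Y}$, inverse images are set-valued: $f^{-1}(x):=\{\eta\in\mathcal{X}: f(\eta)=x\}$, $h^{-1}(y):=\{\eta:h(\eta)=y\}$; images of sets are $f(S)=\{f(s):s\in S\}$ and $[S]_k:=\bigcup_{s\in S}[s]_k$. Define $[x]_0:=h^{-1}(h(x))$, and for $k\ge0$: $[x]_k^+:=f([f^{-1}(x)]_k)$, $[x]_{k+1}:=[x]_k^+\cap[x]_0$. Here $f(x)=Ax$, $h(x)=Cx$. Solutions: $\phi(0,x)=x$, $\phi(k+1,x)=f(\phi(k,x))$. Given $g:\mathcal{X}\times\mathcal{Y}\rightrightarrows\mathcal{X}$, a solution of $\hat x^+\in g(\hat x,h(x))$ driven by $x^+=f(x)$ is any sequence $\psi(k,\hat x,x)$ with $\psi(0,\hat x,x)=\hat x$, $\psi(k+1,\hat x,x)\in g(\psi(k,\hat x,x),h(\phi(k,x)))$. The system $\hat x^+\in g(\hat x,y)$ is a deadbeat observer if there is $p\ge1$ such that all such solutions satisfy $\psi(k,\hat x,x)=\phi(k,x)$ for all $x,\hat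 x\in\mathcal{X}$ and $k\ge p$; the system is deadbeat observable if a deadbeat observer exists. *)

From HB Require Import structures.
From mathcomp Require Import all_boot all_order all_algebra.
Set Implicit Arguments. Unset Strict Implicit. Unset Printing Implicit Defensive.
Import GRing.Theory Num.Theory.

Section Generic.
Variables (X Y : Type) (f : X -> X) (h : X -> Y).

(* [x]_k as a subset of X:
   [x]_0 = h^{-1}(h x),
   [x]_{k+1} = f([f^{-1}(x)]_k) ∩ [x]_0,
   where [S]_k = ⋃_{s∈S} [s]_k and f^{-1}(x) = {e | f e = x}. *)
Fixpoint cls (k : nat) (x : X) : X -> Prop :=
  match k with
  | 0 => fun eta => h eta = h x
  | k'.+1 => fun eta =>
      (exists s, (exists e, f e = x /\ cls k' e s) /\ f s = eta)
      /\ h eta = h x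
  end.

Definition phi (k : nat) (x : X) : X := iter k f x.

Definition is_obs_solution (g : X -> Y -> X -> Prop) (xhat x : X)
  (psi : nat -> X) : Prop :=
  psi 0 = xhat /\ forall k, g (psi k) (h (phi k x)) (psi k.+1).

Definition setvalued_nonempty (g : X -> Y -> X -> Prop) : Prop :=
  forall xh y, exists z, g xh y z.

Definition deadbeat_observer (g : X -> Y -> X -> Prop) : Prop :=
  exists p : nat, (1 <= p)%N /\
    forall x xhat psi, is_obs_solution g xhat x psi ->
      forall k, (p <= k)%N -> psi k = phi k x.

Definition deadbeat_observable : Prop :=
  exists g, setvalued_nonempty g /\ deadbeat_observer g.

End Generic.

(* Unrolling the recursion, [x]_k consists of the states f^k xi such that
   x = f^k ze for some ze whose outputs agree with those of xi up to time k.
   A deadbeat observer with horizon p computes f^p of the true initial state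
   from its first p outputs, so [x]_p is empty or {x}.

   Conversely, for a linear system the condition on [0]_q says that an initial
   state invisible in the outputs up to time q is sent to 0 by A^q.  Let W_k
   be the image under A^k of the states invisible up to time k-1; it is
   decreasing in k and W_{q+1} = 0.  The observer corrects its estimate by an
   explanation w of the output error lying in every W_k that contains some
   explanation; then the estimation error at time k stays in W_k, so it
   vanishes from time q+1 on. *)

From HB Require Import structures.
From mathcomp Require Import all_boot all_order all_algebra.
From Stdlib Require Import Classical ClassicalEpsilon.
Set Implicit Arguments.
Unset Strict Implicit.
Unset Printing Implicit Defensive.

Import GRing.Theory Num.Theory.
Local Open Scope ring_scope.

Lemma classical_ex_max (P : nat -> Prop) (b : nat) :
  P 0%N -> (forall k, P k -> (k <= b)%N) ->
  exists2 K, P K & forall k, P k -> (k <= K)%N.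
Proof.
elim: b => [|b IHb] P0 Pb; first by exists 0%N => // k /Pb.
have [PSb | nPSb] := classic (P b.+1); first by exists b.+1.
apply: IHb => // k Pk; have := Pb k Pk; rewrite leq_eqVlt => /orP[/eqP Ek|//].
by rewrite Ek in Pk.
Qed.

Section GeneralSystem.
Variables (X Y : Type) (f : X -> X) (h : X -> Y).

Lemma clsE k x eta :
  cls f h k x eta <->
  exists xi ze, [/\ iter k f xi = eta, iter k f ze = x &
    forall j, (j <= k)%N -> h (iter j f xi) = h (iter j f ze)].
Proof.
elim: k x eta => [|k IHk] x eta /=.
  split=> [hx | [xi [ze [<- <- /(_ 0%N isT) //]]]].
  by exists eta, x; split=> // j; rewrite leqn0 => /eqP ->.
split=> [[[s [[e [fe_x cls_e_s]] fs_eta]] h_eta] | [xi [ze [<- <- hxz]]]].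
  have [xi [ze [xi_s ze_e hxz]]] := (IHk e s).1 cls_e_s.
  exists xi, ze; split; [by rewrite /= xi_s | by rewrite /= ze_e |].
  move=> j; rewrite leq_eqVlt => /orP[/eqP -> | ]; last first.
    by rewrite ltnS; apply: hxz.
  by rewrite /= xi_s ze_e fs_eta fe_x.
split; last exact: hxz k.+1 _.
exists (iter k f xi); split=> //; exists (iter k f ze); split=> //.
by apply/IHk; exists xi, ze; split=> // j /leqW; apply: hxz.
Qed.

Fixpoint observer_run (next : X -> Y -> X) (x0 : X) (y : nat -> Y) k : X :=
  if k is k'.+1 then next (observer_run next x0 y k') (y k') else x0.

Lemma observer_run_prefix next x0 y y' k :
  (forall j, (j < k)%N -> y j = y' j) ->
  observer_run next x0 y k = observer_run next x0 y' k.
Proof.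
elim: k => [//|k IHk] yy' /=.
by rewrite IHk ?yy' // => j /ltnW; apply: yy'.
Qed.

Lemma deadbeat_iter_eq g p :
  setvalued_nonempty g ->
  (forall x xhat psi, is_obs_solution f h g xhat x psi ->
     forall k, (p <= k)%N -> psi k = phi f k x) ->
  forall xi ze, (forall j, (j < p)%N -> h (iter j f xi) = h (iter j f ze)) ->
  iter p f xi = iter p f ze.
Proof.
move=> g_nonempty deadbeat xi ze hxz.
have [next g_next] : exists next, forall xh y, g xh y (next xh y).
  exists (fun xh y => proj1_sig (constructive_indefinite_description _
                                   (g_nonempty xh y))).
  by move=> xh y; apply: proj2_sig.
pose run x := observer_run next xi (fun k => h (phi f k x)).
have run_solution x : is_obs_solution f h g xi x (run x) by split=> // k /=.
rewrite -[LHS](deadbeat _ _ _ (run_solution xi)) //.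
rewrite -[RHS](deadbeat _ _ _ (run_solution ze)) //.
by apply: observer_run_prefix => j /hxz.
Qed.

Lemma deadbeat_observable_cls_sub1 :
  deadbeat_observable f h -> exists p, forall x eta, cls f h p x eta -> eta = x.
Proof.
case=> g [g_nonempty [p [_ deadbeat]]]; exists p => x eta.
case/clsE=> xi [ze [<- <- hxz]].
apply: deadbeat_iter_eq g_nonempty deadbeat _ _ _ => j /ltnW.
exact: hxz.
Qed.

End GeneralSystem.

Lemma singleton_or_empty (X : Type) (S : X -> Prop) (x : X) :
  (forall eta, S eta -> eta = x) ->
  (exists z, forall eta, S eta <-> eta = z) \/ (forall eta, ~ S eta).
Proof.
move=> S_sub1; have [[z Sz] | S0] := classic (exists z, S z).
  by left; exists z => eta; split=> [/S_sub1 -> | ->] //; rewrite (S_sub1 z Sz).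
by right=> eta Seta; apply: S0; exists eta.
Qed.

Section LinearSystem.
Variables (R : realFieldType) (n m : nat) (A : 'M[R]_n) (C : 'M[R]_(m, n)).
Local Notation fA := (fun x : 'cV[R]_n => A *m x).
Local Notation hC := (fun x : 'cV[R]_n => C *m x).

Lemma iter_mulmxB k (a b : 'cV[R]_n) :
  iter k fA (a - b) = iter k fA a - iter k fA b.
Proof. by elim: k => [//|k IHk]; rewrite /= IHk mulmxBr. Qed.

Lemma iter_mulmx0 k : iter k fA 0 = 0.
Proof. by elim: k => [//|k IHk]; rewrite /= IHk mulmx0. Qed.

Lemma cls0_silent k xi :
  (forall j, (j <= k)%N -> C *m iter j fA xi = 0) ->
  cls fA hC k 0 (iter k fA xi).
Proof.
move=> silent; apply/clsE; exists xi, 0; split=> //; first exact: iter_mulmx0.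
by move=> j /silent ->; rewrite iter_mulmx0 mulmx0.
Qed.

Lemma cls00 k : cls fA hC k 0 0.
Proof.
rewrite -{2}(iter_mulmx0 k); apply: cls0_silent => j _.
by rewrite iter_mulmx0 mulmx0.
Qed.

Lemma cls0_trivial_silent_iter_eq0 k :
  (exists z, forall eta, cls fA hC k 0 eta <-> eta = z) \/
  (forall eta, ~ cls fA hC k 0 eta) ->
  forall xi, (forall j, (j <= k)%N -> C *m iter j fA xi = 0) -> iter k fA xi = 0.
Proof.
case=> [[z cls_z] | cls_empty] xi /cls0_silent cls_xi; last first.
  by case: (cls_empty _ (cls00 k)).
by rewrite ((cls_z _).1 cls_xi) ((cls_z _).1 (cls00 k)).
Qed.

Definition silent_image k (e : 'cV[R]_n) :=
  exists2 xi, iter k fA xi = e & forall j, (j < k)%N -> C *m iter j fA xi = 0.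

Lemma silent_image0 k : silent_image k 0.
Proof.
by exists 0 => [|j _]; rewrite iter_mulmx0 ?mulmx0.
Qed.

Lemma silent_imageW j k e : (j <= k)%N -> silent_image k e -> silent_image j e.
Proof.
move=> le_jk [xi <- silent]; exists (iter (k - j) fA xi).
  by rewrite -iterD subnKC.
by move=> i lt_ij; rewrite -iterD silent // -{2}(subnKC le_jk) ltn_add2r.
Qed.

Lemma silent_image_step k e1 e2 :
  silent_image k e1 -> silent_image k e2 -> C *m e1 = C *m e2 ->
  silent_image k.+1 (A *m (e1 - e2)).
Proof.
move=> [xi1 <- silent1] [xi2 <- silent2] C_eq.
exists (xi1 - xi2); first by rewrite /= iter_mulmxB.
move=> j; rewrite ltnS leq_eqVlt => /orP[/eqP -> | lt_jk].
  by rewrite iter_mulmxB mulmxBr C_eq subrr.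
by rewrite iter_mulmxB mulmxBr silent1 ?silent2 ?subrr.
Qed.

Definition best_correction (z : 'cV[R]_m) (w : 'cV[R]_n) :=
  C *m w = z /\
  forall k, (exists2 e, silent_image k e & C *m e = z) -> silent_image k w.

(* The second alternative only makes the map total: along a run the output
   error is always explained by some silent image, so it never fires. *)
Definition best_correction_observer xh y (xh' : 'cV[R]_n) :=
  (exists2 w, best_correction (C *m xh - y) w & xh' = A *m (xh - w))
  \/ ~ (exists w, best_correction (C *m xh - y) w).

Lemma best_correction_observer_nonempty :
  setvalued_nonempty best_correction_observer.
Proof.
move=> xh y.
have [[w best_w] | no_w] := classic (exists w, best_correction (C *m xh - y) w).
  by exists (A *m (xh - w)); left; exists w.
by exists 0; right.
Qed.

Section SilentVanish.
Variable q : nat.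
Hypothesis silent_iter_eq0 : forall xi,
  (forall j, (j <= q)%N -> C *m iter j fA xi = 0) -> iter q fA xi = 0.

Lemma silent_image_eq0 k e : (q < k)%N -> silent_image k e -> e = 0.
Proof.
move=> lt_qk [xi <- silent]; rewrite -(subnK (ltnW lt_qk)) iterD.
by rewrite silent_iter_eq0 ?iter_mulmx0 // => j /leq_ltn_trans/(_ lt_qk)/silent.
Qed.

Lemma best_correction_exists k e :
  silent_image k e -> exists w, best_correction (C *m e) w.
Proof.
move=> silent_e; have [Ce0 | Ce_neq0] := eqVneq (C *m e) 0.
  rewrite Ce0; exists 0; split=> [|j _]; first exact: mulmx0.
  exact: silent_image0.
pose explains j := exists2 e', silent_image j e' & C *m e' = C *m e.
have [K [w silent_w Cw] maxK] :
    exists2 K, explains K & forall j, explains j -> (j <= K)%N.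
  apply: (@classical_ex_max _ q).
    by exists e => //; apply: silent_imageW silent_e.
  move=> j [e' silent_e' Ce']; rewrite leqNgt; apply/negP => lt_qj.
  by move: Ce_neq0; rewrite -Ce' (silent_image_eq0 lt_qj silent_e') mulmx0 eqxx.
exists w; split=> // j /maxK le_jK; exact: silent_imageW le_jK silent_w.
Qed.

Lemma best_correction_observer_error x xhat psi :
  is_obs_solution fA hC best_correction_observer xhat x psi ->
  forall k, silent_image k (psi k - phi fA k x).
Proof.
case=> _ step; elim=> [|k IHk]; first by exists (psi 0%N - x).
have C_err : C *m (psi k - phi fA k x) = C *m psi k - C *m phi fA k x.
  exact: mulmxBr.
have [w best_w] := best_correction_exists IHk; rewrite C_err in best_w.
case: (step k) => [[w' [Cw' best_w'] ->] | no_w]; last by case: no_w; exists w.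
have silent_w' : silent_image k w' by apply: best_w'; exists (psi k - phi fA k x).
rewrite [phi _ _ _]/= -mulmxBr addrAC.
by apply: silent_image_step IHk silent_w' _; rewrite C_err Cw'.
Qed.

Lemma best_correction_deadbeat :
  deadbeat_observer fA hC best_correction_observer.
Proof.
exists q.+1; split=> // x xhat psi run k le_qk.
apply/subr0_eq/(silent_image_eq0 le_qk).
exact: best_correction_observer_error run k.
Qed.

End SilentVanish.
End LinearSystem.

Theorem theorem1 (R : realFieldType) (n m : nat)
  (A : 'M[R]_n) (C : 'M[R]_(m, n)) :
  deadbeat_observable (fun x : 'cV[R]_n => A *m x)
                      (fun x : 'cV[R]_n => C *m x)
  <->
  exists p : nat, (1 <= p)%N /\
    forall x : 'cV[R]_n,
      let S := cls (fun x : 'cV[R]_n => A *m x)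
                   (fun x : 'cV[R]_n => C *m x) (p - 1) x in
      (exists z, forall eta, S eta <-> eta = z) \/ (forall eta, ~ S eta).
Proof.
split=> [/deadbeat_observable_cls_sub1 [p cls_sub1] | [p [_ cls_p]]].
  by exists p.+1; split=> // x; rewrite subn1; apply/singleton_or_empty/cls_sub1.
exists (best_correction_observer A C); split.
  exact: best_correction_observer_nonempty.
exact/best_correction_deadbeat/cls0_trivial_silent_iter_eq0/(cls_p 0).
Qed.
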